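(* If $X$ and $Y$ are weakly Alster spaces, then $X\times Y$ is weakly Alster.
   Context: All spaces are infinite ${\sf T}_1$ topological spaces. For a space $Z$, $\mathcal{G}_K$ is the family of all collections $\mathcal{U}$ of ${\sf G}_\delta$ subsets of $Z$ with $Z\notin\mathcal{U}$ such that each compact subset of $Z$ is contained in some member of $\mathcal{U}$. $Z$ is weakly Alster if every member of $\mathcal{G}_K$ (for $Z$) has a countable subcollection whose union is dense in $Z$. *)

From Stdlib Require Import List.

Set Implicit Arguments.

Record space := Space {
  carrier :> Type;
  open : (carrier -> Prop) -> Prop;
  open_full : open (fun _ => True);
  open_inter : forall U V, open U -> open V -> open (fun x => U x /\ V x);
  open_union : forall F : (carrier -> Prop) -> Prop,
      (forall U, F U -> open U) -> open (fun x => exists U, F U /\ U x)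
}.

Arguments open {s} _.

Section Notions.
Variable Z : space.

Definition T1 : Prop :=
  forall x y : Z, x <> y -> exists U, open U /\ U x /\ ~ U y.

Definition infinite_space : Prop :=
  forall l : list Z, exists x, ~ In x l.

Definition compact (K : Z -> Prop) : Prop :=
  forall F : (Z -> Prop) -> Prop,
    (forall U, F U -> open U) ->
    (forall x, K x -> exists U, F U /\ U x) ->
    exists l : list (Z -> Prop),
      (forall U, In U l -> F U) /\ (forall x, K x -> exists U, In U l /\ U x).

Definition Gdelta (G : Z -> Prop) : Prop :=
  exists f : nat -> (Z -> Prop),
    (forall n, open (f n)) /\ (forall x, G x <-> forall n, f n x).

Definition dense (D : Z -> Prop) : Prop :=
  forall U, open U -> (exists x, U x) -> exists x, U x /\ D x.

Definition in_GK (C : (Z -> Prop) -> Prop) : Prop :=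
  (forall U, C U -> Gdelta U) /\
  (forall U, C U -> exists x, ~ U x) /\
  (forall K, compact K -> exists U, C U /\ forall x, K x -> U x).

(* countable subcollection with dense union (nat-indexed; repetitions allowed) *)
Definition weakly_Alster : Prop :=
  forall C, in_GK C ->
    exists f : nat -> (Z -> Prop),
      (forall n, C (f n)) /\ dense (fun x => exists n, f n x).

End Notions.

Section Product.
Variables X Y : space.

Definition prod_open (W : X * Y -> Prop) : Prop :=
  forall p, W p -> exists U V, open U /\ open V /\ U (fst p) /\ V (snd p) /\
    (forall a b, U a -> V b -> W (a, b)).

Lemma prod_open_full : prod_open (fun _ => True).
Proof.
  intros p _. exists (fun _ => True), (fun _ => True).
  repeat split; auto using open_full.
Qed.

Lemma prod_open_inter : forall U V, prod_open U -> prod_open V ->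
  prod_open (fun x => U x /\ V x).
Proof.
  intros U V HU HV p [Up Vp].
  destruct (HU p Up) as (A & B & oA & oB & Ap & Bp & HAB).
  destruct (HV p Vp) as (C & D & oC & oD & Cp & Dp & HCD).
  exists (fun x => A x /\ C x), (fun y => B y /\ D y).
  repeat split; auto using open_inter.
  - apply HAB; tauto.
  - apply HCD; tauto.
Qed.

Lemma prod_open_union : forall F : (X * Y -> Prop) -> Prop,
  (forall U, F U -> prod_open U) -> prod_open (fun x => exists U, F U /\ U x).
Proof.
  intros F HF p [W [FW Wp]].
  destruct (HF W FW p Wp) as (A & B & oA & oB & Ap & Bp & HAB).
  exists A, B. repeat split; auto.
  intros a b Aa Bb. exists W. split; auto.
Qed.

Definition prod_space : space :=
  @Space (X * Y)%type prod_open prod_open_full prod_open_inter prod_open_union.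

End Product.

From Stdlib Require Import List Classical ClassicalEpsilon FunctionalExtensionality PropExtensionality.
From Stdlib Require Cantor.

(* Let C be in G_K(X x Y).  The proof has three layers.
   1. A generalized Wallace theorem: a property of pairs of open sets that is
      hereditary, stable under finite unions in each coordinate and holds
      locally around every point of K x L (K, L compact) holds for some pair
      of open neighbourhoods of K and L.  It yields both the Wallace theorem
      and the compactness of K x L.
   2. Consequently, for compact K and L there are G_delta sets A >= K,
      H >= L and G in C with A x H <= G ([Gdelta_rectangle]).
   3. In a weakly Alster space the clause "Z is not a member" of G_K is
      harmless: if every compact set lies in a G_delta set with a property P,
      then countably many G_delta sets with P have dense union
      ([weakly_Alster_dense_family]).  Applied in Y this gives, for each
      compact K of X, a G_delta A >= K, a dense D in Y and countably many
      members of C covering A x D ([compact_slice]); applied once more in X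
      it gives countably many such A_j with dense union, and the countably
      many members of C attached to them have dense union in X x Y. *)

#[local] Arguments Gdelta {Z} _.
#[local] Arguments dense {Z} _.
#[local] Arguments in_GK {Z} _.
#[local] Arguments compact {Z} _.
#[local] Arguments prod_open {X Y} _.

Lemma set_ext {A : Type} (U V : A -> Prop) : (forall x, U x <-> V x) -> U = V.
Proof.
  intros H. apply functional_extensionality. intros x.
  apply propositional_extensionality. apply H.
Qed.

Definition flatten {A : Type} (g : nat -> nat -> A) (n : nat) : A :=
  g (fst (Cantor.of_nat n)) (snd (Cantor.of_nat n)).

Lemma flatten_pair {A : Type} (g : nat -> nat -> A) (j m : nat) :
  flatten g (Cantor.to_nat (j, m)) = g j m.
Proof. unfold flatten. rewrite Cantor.cancel_of_to. reflexivity. Qed.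

Section OpenSets.
Context {Z : space}.

Lemma open_empty : @open Z (fun _ => False).
Proof.
  assert (E : (fun x : Z => exists U : Z -> Prop, False /\ U x) = (fun _ => False)).
  { apply set_ext. intros x; split; [intros [U [[] _]] | intros []]. }
  rewrite <- E. apply open_union. intros U [].
Qed.

Lemma open_or (U V : Z -> Prop) :
  open U -> open V -> open (fun z => U z \/ V z).
Proof.
  intros HU HV.
  assert (E : (fun x : Z => exists W : Z -> Prop, (W = U \/ W = V) /\ W x)
              = (fun z => U z \/ V z)).
  { apply set_ext. intros x; split.
    - intros [W [[-> | ->] Wx]]; auto.
    - intros [Ux | Vx]; [exists U | exists V]; auto. }
  rewrite <- E. apply open_union. intros W [-> | ->]; auto.
Qed.

Fixpoint union_list (l : list (Z -> Prop)) : Z -> Prop :=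
  match l with
  | nil => fun _ => False
  | U :: l' => fun z => U z \/ union_list l' z
  end.

Lemma union_list_closed (R : (Z -> Prop) -> Prop) (l : list (Z -> Prop)) :
  R (fun _ => False) -> (forall U U', R U -> R U' -> R (fun z => U z \/ U' z)) ->
  (forall U, In U l -> R U) -> R (union_list l).
Proof.
  intros R0 RU. induction l as [|U l IH]; simpl; intros Hl; [exact R0|].
  apply RU; [apply Hl; left; reflexivity | apply IH; intros W HW; apply Hl; right; exact HW].
Qed.

Lemma union_list_In {l : list (Z -> Prop)} {U : Z -> Prop} {x : Z} :
  In U l -> U x -> union_list l x.
Proof.
  induction l as [|W l IH]; simpl; [tauto|].
  intros [-> | Ul] Ux; auto.
Qed.

Lemma compact_local_global {K : Z -> Prop} (R : (Z -> Prop) -> Prop) :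
  compact K -> R (fun _ => False) ->
  (forall U U', R U -> R U' -> R (fun z => U z \/ U' z)) ->
  (forall x, K x -> exists U, open U /\ U x /\ R U) ->
  exists U, open U /\ (forall x, K x -> U x) /\ R U.
Proof.
  intros HK R0 RU Hx.
  destruct (HK (fun U => open U /\ R U)) as [l [Hl Hcov]].
  - intros U [oU _]; exact oU.
  - intros x Kx. destruct (Hx x Kx) as [U [oU [Ux RUx]]]. exists U; auto.
  - exists (union_list l). split; [|split].
    + apply union_list_closed; [apply open_empty | apply open_or | apply Hl].
    + intros x Kx. destruct (Hcov x Kx) as [U [Ul Ux]]. exact (union_list_In Ul Ux).
    + apply union_list_closed; auto. apply Hl.
Qed.

Lemma Gdelta_inter (h : nat -> Z -> Prop) :
  (forall m, Gdelta (h m)) -> Gdelta (fun z => forall m, h m z).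
Proof.
  intros H. destruct (choice _ H) as [f Hf].
  exists (flatten f). split.
  - intros n. apply (proj1 (Hf _)).
  - intros x; split.
    + intros Hx n. apply (proj2 (Hf _)). apply Hx.
    + intros Hx m. apply (proj2 (Hf m)). intros n.
      rewrite <- (flatten_pair f m n). apply Hx.
Qed.

Lemma weakly_Alster_dense_family (P : (Z -> Prop) -> Prop) :
  weakly_Alster Z ->
  (forall K, compact K -> exists U, Gdelta U /\ (forall x, K x -> U x) /\ P U) ->
  exists f : nat -> (Z -> Prop), (forall n, P (f n)) /\ dense (fun x => exists n, f n x).
Proof.
  intros WZ HP.
  destruct (classic (exists U, P U /\ forall x, U x)) as [[U [PU HU]] | Nfull].
  - exists (fun _ => U). split; [auto|].
    intros V _ [x Vx]. exists x. split; [exact Vx | exists 0; apply HU].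
  - destruct (WZ (fun U => Gdelta U /\ (exists x, ~ U x) /\ P U)) as [f [Hf Hd]].
    + split; [intros U [GU _]; exact GU | split; [intros U [_ [HU _]]; exact HU |]].
      intros K HK. destruct (HP K HK) as [U [GU [KU PU]]].
      exists U. split; [| exact KU]. split; [exact GU | split; [| exact PU]].
      apply NNPP. intros Hn. apply Nfull. exists U. split; [exact PU |].
      intros x. apply NNPP. intros Hx. apply Hn. exists x. exact Hx.
    + exists f. split; [intros n; apply (Hf n) | exact Hd].
Qed.

End OpenSets.

Section Product.
Context {X Y : space}.

Lemma wallace_principle {K : X -> Prop} {L : Y -> Prop}
  (Q : (X -> Prop) -> (Y -> Prop) -> Prop) :
  compact K -> compact L ->
  (forall U U' V V', Q U V -> (forall a, U' a -> U a) -> (forall b, V' b -> V b) -> Q U' V') ->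
  (forall V, Q (fun _ => False) V) -> (forall U, Q U (fun _ => False)) ->
  (forall U U' V, Q U V -> Q U' V -> Q (fun a => U a \/ U' a) V) ->
  (forall U V V', Q U V -> Q U V' -> Q U (fun b => V b \/ V' b)) ->
  (forall a b, K a -> L b ->
     exists U V, open U /\ open V /\ U a /\ V b /\ Q U V) ->
  exists U V, open U /\ open V /\ (forall a, K a -> U a) /\ (forall b, L b -> V b) /\ Q U V.
Proof.
  intros HK HL mono emptyl emptyr unionl unionr local.
  assert (slice : forall b, L b -> exists U, open U /\ (forall a, K a -> U a) /\
                   exists V, open V /\ V b /\ Q U V).
  { intros b Lb. apply (compact_local_global
      (fun U => exists V, open V /\ V b /\ Q U V) HK).
    - exists (fun _ => True). repeat split; auto using open_full.
    - intros U U' [V [oV [Vb QUV]]] [V' [oV' [V'b QU'V']]].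
      exists (fun y => V y /\ V' y). repeat split; auto using open_inter.
      apply unionl; [apply (mono U U V) | apply (mono U' U' V')]; tauto.
    - intros a Ka. destruct (local a b Ka Lb) as (U & V & oU & oV & Ua & Vb & QUV).
      exists U. repeat split; auto. exists V. auto. }
  destruct (compact_local_global
    (fun V => exists U, open U /\ (forall a, K a -> U a) /\ Q U V) HL)
    as [V [oV [LV [U [oU [KU QUV]]]]]].
  - exists (fun _ => True). repeat split; auto using open_full.
  - intros V V' [U [oU [KU QUV]]] [U' [oU' [KU' QU'V']]].
    exists (fun x => U x /\ U' x). repeat split; auto using open_inter.
    apply unionr; [apply (mono U _ V) | apply (mono U' _ V')]; tauto.
  - intros b Lb. destruct (slice b Lb) as [U [oU [KU [V [oV [Vb QUV]]]]]].
    exists V. repeat split; auto. exists U. auto.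
  - exists U, V. auto.
Qed.

Lemma wallace {K : X -> Prop} {L : Y -> Prop} (W : X * Y -> Prop) :
  compact K -> compact L -> prod_open W ->
  (forall a b, K a -> L b -> W (a, b)) ->
  exists U V, open U /\ open V /\ (forall a, K a -> U a) /\ (forall b, L b -> V b) /\
    forall a b, U a -> V b -> W (a, b).
Proof.
  intros HK HL HW KLW.
  apply (wallace_principle (fun U V => forall a b, U a -> V b -> W (a, b)) HK HL).
  - intros U U' V V' UVW HU HV a b U'a V'b. auto.
  - intros V a b [].
  - intros U a b _ [].
  - intros U U' V UVW U'VW a b [Ua | U'a] Vb; auto.
  - intros U V V' UVW UV'W a b Ua [Vb | V'b]; auto.
  - intros a b Ka Lb. exact (HW (a, b) (KLW a b Ka Lb)).
Qed.

Definition fin_covered (F : (X * Y -> Prop) -> Prop) (S : X * Y -> Prop) : Prop :=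
  exists l : list (X * Y -> Prop),
    (forall W, In W l -> F W) /\ (forall p, S p -> exists W, In W l /\ W p).

Lemma fin_covered_union {F : (X * Y -> Prop) -> Prop} {S S' : X * Y -> Prop} :
  fin_covered F S -> fin_covered F S' -> fin_covered F (fun p => S p \/ S' p).
Proof.
  intros [l [Fl Sl]] [l' [Fl' Sl']]. exists (l ++ l'). split.
  - intros W HW. apply in_app_or in HW. destruct HW; auto.
  - intros p [Sp | Sp];
      [destruct (Sl p Sp) as [W [HW Wp]] | destruct (Sl' p Sp) as [W [HW Wp]]];
      exists W; split; auto; apply in_or_app; auto.
Qed.

Lemma prod_compact {K : X -> Prop} {L : Y -> Prop} :
  compact K -> compact L ->
  @compact (prod_space X Y) (fun p => K (fst p) /\ L (snd p)).
Proof.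
  intros HK HL F HF Hcov.
  set (Q := fun U V => fin_covered F (fun p => U (fst p) /\ V (snd p))).
  destruct (wallace_principle Q HK HL) as (U & V & _ & _ & KU & LV & [l [Fl Hl]]).
  - intros U U' V V' [l [Fl Hl]] HU HV. exists l. split; auto.
    intros p [U'p V'p]. apply Hl. auto.
  - intros V. exists nil. split; [intros W [] | intros p [[] _]].
  - intros U. exists nil. split; [intros W [] | intros p [_ []]].
  - intros U U' V HU HU'. destruct (fin_covered_union HU HU') as [l [Fl Hl]].
    exists l. split; auto. intros p [[Up | U'p] Vp]; apply Hl; auto.
  - intros U V V' HV HV'. destruct (fin_covered_union HV HV') as [l [Fl Hl]].
    exists l. split; auto. intros p [Up [Vp | V'p]]; apply Hl; auto.
  - intros a b Ka Lb. destruct (Hcov (a, b) (conj Ka Lb)) as [W [FW Wab]].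
    destruct (HF W FW (a, b) Wab) as (U & V & oU & oV & Ua & Vb & UVW).
    exists U, V. repeat split; auto. exists (W :: nil). split.
    + intros W' [<- | []]. exact FW.
    + intros [x y] [Ux Vy]. exists W. split; [left; reflexivity | apply UVW; auto].
  - exists l. split; auto. intros p [Kp Lp]. apply Hl. auto.
Qed.

Lemma Gdelta_rectangle {C : (prod_space X Y -> Prop) -> Prop}
  {K : X -> Prop} {L : Y -> Prop} :
  in_GK C -> compact K -> compact L ->
  exists A H G, Gdelta A /\ (forall a, K a -> A a) /\
    Gdelta H /\ (forall b, L b -> H b) /\
    C G /\ forall a b, A a -> H b -> G (a, b).
Proof.
  intros [HG [_ Hc]] HK HL.
  destruct (Hc _ (prod_compact HK HL)) as [G [CG KLG]].
  destruct (HG G CG) as [f [fo fG]].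
  assert (rect : forall n, exists p : (X -> Prop) * (Y -> Prop),
     open (fst p) /\ open (snd p) /\ (forall a, K a -> fst p a) /\ (forall b, L b -> snd p b) /\
     forall a b, fst p a -> snd p b -> f n (a, b)).
  { intros n. destruct (wallace (f n) HK HL) as (U & V & HUV).
    - apply fo.
    - intros a b Ka Lb. apply (proj1 (fG (a, b))). apply (KLG (a, b)). simpl; auto.
    - exists (U, V). exact HUV. }
  destruct (choice _ rect) as [p Hp].
  exists (fun a => forall n, fst (p n) a), (fun b => forall n, snd (p n) b), G.
  repeat split.
  - exists (fun n => fst (p n)). split; [intros n; apply (Hp n) | tauto].
  - intros a Ka n. apply (Hp n); auto.
  - exists (fun n => snd (p n)). split; [intros n; apply (Hp n) | tauto].
  - intros b Lb n. apply (Hp n); auto.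
  - exact CG.
  - intros a b Ha Hb. apply (proj2 (fG (a, b))). intros n. apply (Hp n); auto.
Qed.

Lemma compact_slice {C : (prod_space X Y -> Prop) -> Prop} {K : X -> Prop} :
  in_GK C -> weakly_Alster Y -> compact K ->
  exists A, Gdelta A /\ (forall a, K a -> A a) /\
  exists (g : nat -> (prod_space X Y -> Prop)) (D : Y -> Prop), (forall m, C (g m)) /\
    dense D /\ forall a b, A a -> D b -> exists m, g m (a, b).
Proof.
  intros HC WY HK.
  destruct (weakly_Alster_dense_family
    (fun H => exists A G, Gdelta A /\ (forall a, K a -> A a) /\ C G /\
                          forall a b, A a -> H b -> G (a, b)) WY)
    as [h [Hh Hd]].
  { intros L HL. destruct (Gdelta_rectangle HC HK HL) as (A & H & G & GA & KA & GH & LH & HG).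
    exists H. repeat split; auto. exists A, G. auto. }
  destruct (choice _ Hh) as [A HA]. destruct (choice _ HA) as [g Hg].
  exists (fun a => forall m, A m a). split; [|split].
  - apply Gdelta_inter. intros m. apply (Hg m).
  - intros a Ka m. apply (Hg m); auto.
  - exists g, (fun b => exists m, h m b). split; [intros m; apply (Hg m)|].
    split; [exact Hd|]. intros a b Ha [m Hb]. exists m. apply (Hg m); auto.
Qed.

Lemma prod_dense (E : X * Y -> Prop) :
  (forall U V, open U -> open V -> (exists a, U a) -> (exists b, V b) ->
     exists a b, U a /\ V b /\ E (a, b)) ->
  @dense (prod_space X Y) E.
Proof.
  intros HE W oW [p Wp].
  destruct (oW p Wp) as (U & V & oU & oV & Up & Vp & UVW).
  destruct (HE U V oU oV (ex_intro _ _ Up) (ex_intro _ _ Vp)) as (a & b & Ua & Vb & Eab).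
  exists (a, b). split; [apply UVW |]; auto.
Qed.

End Product.

Theorem theorem5p11 (X Y : space) :
  T1 X -> infinite_space X -> T1 Y -> infinite_space Y ->
  weakly_Alster X -> weakly_Alster Y -> weakly_Alster (prod_space X Y).
Proof.
  (* the separation and infinity conventions of the paper are not needed *)
  intros _ _ _ _ WX WY C HC.
  destruct (weakly_Alster_dense_family
    (fun A => exists (g : nat -> (prod_space X Y -> Prop)) (D : Y -> Prop),
       (forall m, C (g m)) /\ dense D /\ forall a b, A a -> D b -> exists m, g m (a, b)) WX)
    as [A [HA dA]].
  { intros K HK. destruct (compact_slice HC WY HK) as [A [GA [KA HP]]]. exists A. auto. }
  destruct (choice _ HA) as [g Hg].
  exists (flatten g). split.
  - intros n. unfold flatten. destruct (Hg (fst (Cantor.of_nat n))) as [D [Cg _]]. apply Cg.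
  - apply prod_dense. intros U V oU oV neU neV.
    destruct (dA U oU neU) as [a [Ua [j Aa]]].
    destruct (Hg j) as [D [_ [dD cover]]].
    destruct (dD V oV neV) as [b [Vb Db]].
    destruct (cover a b Aa Db) as [m Hm].
    exists a, b. split; [exact Ua | split; [exact Vb |]].
    exists (Cantor.to_nat (j, m)). rewrite flatten_pair. exact Hm.
Qed.
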